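(* For integers $j,k,l>1$ let $G_{j,k,l}$ be the group with presentation $\langle x,y,z \mid x^j=e,\ y^k=e,\ xy=z^l\rangle$. Then $G_{j,k,l}$ is solvable if and only if $j=k=l=2$. Moreover $G_{2,2,2}$ is polycyclic. *)

From Stdlib Require Import ZArith.

Record Group := {
  carrier :> Type;
  gmul : carrier -> carrier -> carrier;
  ginv : carrier -> carrier;
  gone : carrier;
  gmul_assoc : forall a b c, gmul a (gmul b c) = gmul (gmul a b) c;
  gmul_1l : forall a, gmul gone a = a;
  gmul_Vl : forall a, gmul (ginv a) a = gone
}.

Arguments gmul {g}. Arguments ginv {g}. Arguments gone {g}.

Fixpoint gpow {G : Group} (a : G) (n : nat) : G :=
  match n with O => gone | S m => gmul a (gpow a m) end.

Definition gzpow {G : Group} (a : G) (m : Z) : G :=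
  match m with
  | Z0 => gone
  | Zpos p => gpow a (Pos.to_nat p)
  | Zneg p => ginv (gpow a (Pos.to_nat p))
  end.

Definition gcomm {G : Group} (a b : G) : G :=
  gmul (gmul (ginv a) (ginv b)) (gmul a b).

Definition is_hom {G H : Group} (f : G -> H) : Prop :=
  forall a b, f (gmul a b) = gmul (f a) (f b).

Inductive gen {G : Group} (S : G -> Prop) : G -> Prop :=
| gen_in : forall a, S a -> gen S a
| gen_one : gen S gone
| gen_mul : forall a b, gen S a -> gen S b -> gen S (gmul a b)
| gen_inv : forall a, gen S a -> gen S (ginv a).

Fixpoint derived {G : Group} (n : nat) : G -> Prop :=
  match n with
  | O => fun _ => True
  | S m => gen (fun g => exists a b, derived m a /\ derived m b /\ g = gcomm a b)
  end.

Definition solvable (G : Group) : Prop :=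
  exists n, forall g : G, derived n g -> g = gone.

Definition is_subgroup {G : Group} (H : G -> Prop) : Prop :=
  H gone /\ (forall a b, H a -> H b -> H (gmul a b)) /\ (forall a, H a -> H (ginv a)).

Definition polycyclic (G : Group) : Prop :=
  exists (n : nat) (H : nat -> G -> Prop),
    (forall g, H 0 g) /\
    (forall g, H n g <-> g = gone) /\
    (forall i, i < n -> is_subgroup (H i)) /\
    (forall i, i < n -> forall g, H (S i) g -> H i g) /\
    (forall i, i < n -> forall g h, H (S i) g -> H i h ->
        H (S i) (gmul (ginv h) (gmul g h))) /\
    (forall i, i < n -> exists t, H i t /\
        forall g, H i g -> exists m : Z, H (S i) (gmul (ginv (gzpow t m)) g)).

(* (G, x, y, z) is a presentation of < x, y, z | x^j = e, y^k = e, xy = z^l >,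
   characterised by its universal property. *)
Definition presents (j k l : nat) (G : Group) (x y z : G) : Prop :=
  gpow x j = gone /\ gpow y k = gone /\ gmul x y = gpow z l /\
  forall (H : Group) (a b c : H),
    gpow a j = gone -> gpow b k = gone -> gmul a b = gpow c l ->
    exists f : G -> H, is_hom f /\ f x = a /\ f y = b /\ f z = c /\
      forall f' : G -> H, is_hom f' -> f' x = a -> f' y = b -> f' z = c ->
        forall w, f' w = f w.

From Stdlib Require Import ZArith Lia List FunctionalExtensionality ProofIrrelevance.
Import ListNotations.

(* A homomorphism out of G is obtained from the universal
   property by choosing a, b, c in some group with a^j = b^k = 1, ab = c^l.
   If the image of such an f contains a nontrivial set T in which every
   element is a commutator of two elements of T, then f maps every term of
   the derived series of G onto T, so the series never reaches 1
   ([not_solvable_of_perfect_image]).  We take for T a copy of the perfect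
   group A5, acting on five consecutive integers; A5 is encoded by pairs of
   lists (a permutation and its inverse), so that its perfectness and the
   fact that it is generated by given permutations are decided by
   computation ([not_solvable_of_A5_image]).  The elements a, b, c are
   permutations of Z or of nat * Z:
   - (2,2,l), l >= 4: a transposition and an l-cycle give all of S5;
   - (2,2,3): explicit even permutations of order 2 and 3 generating A5;
   - all other cases: a wreath construction on l copies of Z, where a, b
     act diagonally and c cycles the copies, with c^l acting diagonally by
     ab; then commutators [c, d] with d diagonal live on the first copy,
     and they generate A5 there (explicitly for {j, k} = {2, 3}, through
     3-cycles built from two rotations otherwise).  For (2,2,2), with t = xy and u = xz, the series
   G > <u, t> > <t> > 1 is subnormal with cyclic factors; polycyclic groups
   are solvable, which gives the converse direction. *)

Section GroupLaws.
Variable G : Group.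

Lemma gmul_Vr (a : G) : gmul a (ginv a) = gone.
Proof.
  rewrite <- (gmul_1l _ (gmul a (ginv a))).
  rewrite <- (gmul_Vl _ (ginv a)) at 1.
  rewrite <- gmul_assoc, (gmul_assoc _ (ginv a) a), gmul_Vl, gmul_1l.
  apply gmul_Vl.
Qed.
Lemma gmul_1r (a : G) : gmul a gone = a.
Proof. rewrite <- (gmul_Vl _ a), gmul_assoc, gmul_Vr, gmul_1l. reflexivity. Qed.
Lemma gmul_Kl (a b : G) : gmul (ginv a) (gmul a b) = b.
Proof. rewrite gmul_assoc, gmul_Vl, gmul_1l. reflexivity. Qed.
Lemma gmul_Kr (a b : G) : gmul a (gmul (ginv a) b) = b.
Proof. rewrite gmul_assoc, gmul_Vr, gmul_1l. reflexivity. Qed.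
Lemma ginv_uniq (a b : G) : gmul a b = gone -> a = ginv b.
Proof.
  intro H. rewrite <- (gmul_1r a), <- (gmul_Vr b), gmul_assoc, H, gmul_1l.
  reflexivity.
Qed.
Lemma ginv_inv (a : G) : ginv (ginv a) = a.
Proof. symmetry. apply ginv_uniq. apply gmul_Vr. Qed.
Lemma ginv_mul (a b : G) : ginv (gmul a b) = gmul (ginv b) (ginv a).
Proof.
  symmetry. apply ginv_uniq.
  rewrite <- gmul_assoc, (gmul_assoc _ (ginv a)), gmul_Vl, gmul_1l, gmul_Vl.
  reflexivity.
Qed.
Lemma ginv_one : ginv (gone : G) = gone.
Proof. symmetry. apply ginv_uniq. apply gmul_1l. Qed.
Lemma gmul_cancel_l (a b c : G) : gmul a b = gmul a c -> b = c.
Proof. intro H. rewrite <- (gmul_Kl a b), H, gmul_Kl. reflexivity. Qed.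
Lemma gpow_comm (a : G) n : gmul a (gpow a n) = gmul (gpow a n) a.
Proof.
  induction n; simpl; [now rewrite gmul_1l, gmul_1r|].
  now rewrite <- gmul_assoc, <- IHn.
Qed.
Lemma gpow_conj (h a : G) n :
  gpow (gmul (gmul h a) (ginv h)) n = gmul (gmul h (gpow a n)) (ginv h).
Proof.
  induction n; simpl; [now rewrite gmul_1r, gmul_Vr|].
  rewrite IHn, !gmul_assoc, <- (gmul_assoc _ (gmul h a) (ginv h) h), gmul_Vl,
    gmul_1r.
  reflexivity.
Qed.
Lemma comm_as_conj (a b : G) :
  gmul (gmul a b) (gmul (ginv a) (ginv b))
  = gmul (gmul (gmul (gmul a b) b) (ginv (gmul a b))) (ginv b).
Proof.
  rewrite ginv_mul, !gmul_assoc, <- (gmul_assoc _ (gmul a b) b (ginv b)),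
    gmul_Vr, gmul_1r.
  reflexivity.
Qed.
End GroupLaws.

Section Hom.
Variables G H : Group.
Variable f : G -> H.
Hypothesis hf : is_hom f.
Lemma hom_one : f gone = gone.
Proof. apply (gmul_cancel_l _ (f gone)). rewrite <- hf, !gmul_1r. reflexivity. Qed.
Lemma hom_inv a : f (ginv a) = ginv (f a).
Proof. apply ginv_uniq. rewrite <- hf, gmul_Vl. apply hom_one. Qed.
Lemma hom_pow a n : f (gpow a n) = gpow (f a) n.
Proof. induction n; simpl; [apply hom_one | now rewrite hf, IHn]. Qed.
End Hom.

Lemma id_hom (H : Group) : is_hom (fun h : H => h).
Proof. intros a b; reflexivity. Qed.

Definition in_image {G H : Group} (f : G -> H) (h : H) := exists w, f w = h.

Section Image.
Variables G H : Group.
Variable f : G -> H.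
Hypothesis hf : is_hom f.
Lemma in_image_mul a b : in_image f a -> in_image f b -> in_image f (gmul a b).
Proof. intros [w1 <-] [w2 <-]. exists (gmul w1 w2). apply hf. Qed.
Lemma in_image_inv a : in_image f a -> in_image f (ginv a).
Proof. intros [w <-]. exists (ginv w). apply (hom_inv _ _ f hf). Qed.
Lemma in_image_conj a b :
  in_image f a -> in_image f b -> in_image f (gmul (gmul a b) (ginv a)).
Proof. intros. apply in_image_mul; auto. apply in_image_mul; auto. apply in_image_inv; auto. Qed.
Lemma in_image_pow a n : in_image f a -> in_image f (gpow a n).
Proof. intros [w <-]. exists (gpow w n). apply (hom_pow _ _ f hf). Qed.
End Image.
Arguments in_image_mul {G H f}. Arguments in_image_inv {G H f}.
Arguments in_image_conj {G H f}. Arguments in_image_pow {G H f}.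

Lemma not_solvable_of_relations j k l (G : Group) (x y z : G) :
  presents j k l G x y z ->
  forall (H : Group) (a b c : H),
  gpow a j = gone -> gpow b k = gone -> gmul a b = gpow c l ->
  (forall f : G -> H, is_hom f ->
     in_image f a -> in_image f b -> in_image f c -> ~ solvable G) ->
  ~ solvable G.
Proof.
  intros (_ & _ & _ & P) H a b c Ha Hb Hc K.
  destruct (P H a b c Ha Hb Hc) as (f & hf & fx & fy & fz & _).
  apply (K f hf); [exists x | exists y | exists z]; auto.
Qed.

(* If f(G) contains a nontrivial set T all of whose elements are commutators
   of elements of T, then by induction T lies in the image of every term of
   the derived series of G, so G is not solvable. *)
Lemma not_solvable_of_perfect_image (G H : Group) (f : G -> H) (hf : is_hom f)
  (T : H -> Prop)
  (HT : forall t, T t -> in_image f t)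
  (Hp : forall t, T t -> exists t1 t2, T t1 /\ T t2 /\ t = gcomm t1 t2)
  (t0 : H) (Ht0 : T t0) (Hne : t0 <> gone) : ~ solvable G.
Proof.
  assert (K : forall n t, T t -> exists w, derived n w /\ f w = t).
  { induction n; intros t Ht.
    - destruct (HT t Ht) as [w Hw]. exists w; split; [exact I | exact Hw].
    - destruct (Hp t Ht) as (t1 & t2 & H1 & H2 & ->).
      destruct (IHn t1 H1) as (w1 & D1 & E1).
      destruct (IHn t2 H2) as (w2 & D2 & E2).
      exists (gcomm w1 w2). split.
      + simpl. apply gen_in. exists w1, w2. auto.
      + unfold gcomm. rewrite !hf, !(hom_inv _ _ f hf), E1, E2. reflexivity. }
  intros [n Hn]. destruct (K n t0 Ht0) as (w & Dw & Ew).
  apply Hne. rewrite <- Ew, (Hn w Dw). apply (hom_one _ _ f hf).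
Qed.

(* Permutations of a type, stored with their inverse; they form the group
   Sym A under composition (extensionality gives equality). *)
Record perm (A : Type) := mkperm {
  pf : A -> A; pg : A -> A;
  pfg : forall x, pf (pg x) = x; pgf : forall x, pg (pf x) = x }.
Arguments mkperm {A}. Arguments pf {A}. Arguments pg {A}.
Arguments pfg {A}. Arguments pgf {A}.

Lemma perm_eq {A} (p q : perm A) : (forall x, pf p x = pf q x) -> p = q.
Proof.
  intro H. destruct p as [f g fg gf], q as [f' g' fg' gf']; simpl in *.
  assert (f = f') by (apply functional_extensionality; auto). subst f'.
  assert (g = g').
  { apply functional_extensionality; intro x.
    rewrite <- (fg' x) at 1. rewrite gf. reflexivity. }
  subst g'. f_equal; apply proof_irrelevance.
Qed.

Definition pmul {A} (p q : perm A) : perm A.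
Proof.
  refine (mkperm (fun x => pf p (pf q x)) (fun x => pg q (pg p x)) _ _);
  intro x; [rewrite pfg, pfg | rewrite pgf, pgf]; reflexivity.
Defined.
Definition pinv {A} (p : perm A) : perm A := mkperm (pg p) (pf p) (pgf p) (pfg p).
Definition pone {A} : perm A :=
  mkperm (fun x => x) (fun x => x) (fun _ => eq_refl) (fun _ => eq_refl).

Definition Sym (A : Type) : Group.
Proof.
  refine (Build_Group (perm A) pmul pinv pone _ _ _).
  - intros; apply perm_eq; reflexivity.
  - intros; apply perm_eq; reflexivity.
  - intros; apply perm_eq; intro x; simpl; apply pgf.
Defined.

Lemma pf_mul {A} (p q : Sym A) x : pf (gmul p q) x = pf p (pf q x).
Proof. reflexivity. Qed.
Lemma pf_inv {A} (p : Sym A) x : pf (ginv p) x = pg p x.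
Proof. reflexivity. Qed.
Lemma pf_one {A} x : pf (gone : Sym A) x = x.
Proof. reflexivity. Qed.
Lemma pf_pow {A} (p : Sym A) n x : pf (gpow p n) x = Nat.iter n (pf p) x.
Proof. induction n; simpl; [reflexivity | now rewrite <- IHn]. Qed.
Lemma pg_iff {A} (p : perm A) x y : pg p x = y <-> x = pf p y.
Proof. split; intro E; [rewrite <- E, pfg | rewrite E, pgf]; reflexivity. Qed.
Lemma pf_inj {A} (p : perm A) x y : pf p x = pf p y -> x = y.
Proof. intro E. rewrite <- (pgf p x), <- (pgf p y), E. reflexivity. Qed.

Definition perm_of_order {A} (f : A -> A) (n : nat)
  (H : forall x, Nat.iter (S n) f x = x) : perm A.
Proof.
  refine (mkperm f (Nat.iter n f) _ _); intro x.
  - exact (H x).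
  - rewrite <- (H x) at 2. simpl. clear H. induction n; simpl; [reflexivity|].
    f_equal. exact IHn.
Defined.

Definition cyc3f (p q r x : Z) : Z :=
  if Z.eq_dec x p then q else if Z.eq_dec x q then r else if Z.eq_dec x r then p else x.
Definition swapf (p q x : Z) : Z :=
  if Z.eq_dec x p then q else if Z.eq_dec x q then p else x.

Lemma cyc3f_1 p q r : cyc3f p q r p = q.
Proof. unfold cyc3f. destruct (Z.eq_dec p p); congruence. Qed.
Lemma cyc3f_2 p q r : p <> q -> cyc3f p q r q = r.
Proof. unfold cyc3f. destruct (Z.eq_dec q p), (Z.eq_dec q q); congruence. Qed.
Lemma cyc3f_3 p q r : p <> r -> q <> r -> cyc3f p q r r = p.
Proof. unfold cyc3f. destruct (Z.eq_dec r p), (Z.eq_dec r q), (Z.eq_dec r r); congruence. Qed.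
Lemma cyc3f_out p q r x : x <> p -> x <> q -> x <> r -> cyc3f p q r x = x.
Proof. unfold cyc3f. destruct (Z.eq_dec x p), (Z.eq_dec x q), (Z.eq_dec x r); congruence. Qed.

Lemma pf_moved {A} (p : perm A) w : pf p w <> w -> pf p (pf p w) <> pf p w.
Proof. intros H E. apply H, (pf_inj p), E. Qed.
Lemma pg_fixed {A} (p : perm A) w : pf p w = w -> pg p w = w.
Proof. intro E. apply pg_iff. auto. Qed.

Lemma comm_3cycle (u v : Sym Z) (s : Z)
  (Hs : forall w, w <> s -> pf u w = w \/ pf v w = w)
  (Hu : pf u s <> s) (Hv : pf v s <> s) :
  forall x, pf (gmul (gmul u v) (gmul (ginv u) (ginv v))) x
            = cyc3f s (pf u s) (pf v s) x.
Proof.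
  assert (Fu : forall w, w <> s -> pf v w <> w -> pf u w = w)
    by (intros w H1 H2; destruct (Hs w H1); tauto).
  assert (Fv : forall w, w <> s -> pf u w <> w -> pf v w = w)
    by (intros w H1 H2; destruct (Hs w H1); tauto).
  assert (Hus : pf v (pf u s) = pf u s) by (apply Fv; [exact Hu | exact (pf_moved u s Hu)]).
  assert (Hvs : pf u (pf v s) = pf v s) by (apply Fu; [exact Hv | exact (pf_moved v s Hv)]).
  assert (Duv : pf u s <> pf v s) by (intro E; apply (pf_moved v s Hv); congruence).
  intro x. rewrite !pf_mul, !pf_inv.
  destruct (Z.eq_dec x s) as [->|n1].
  - rewrite cyc3f_1. remember (pg v s) as w eqn:Ew.
    apply eq_sym, pg_iff in Ew.
    assert (Nw : w <> s) by (intros ->; auto).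
    rewrite (pg_fixed u w (Fu w Nw ltac:(congruence))), <- Ew. reflexivity.
  - destruct (Z.eq_dec x (pf u s)) as [->|n2].
    { rewrite cyc3f_2 by auto. rewrite (pg_fixed v _ Hus), pgf, Hvs. reflexivity. }
    destruct (Z.eq_dec x (pf v s)) as [->|n3].
    { rewrite cyc3f_3 by auto. rewrite pgf. remember (pg u s) as w eqn:Ew.
      apply eq_sym, pg_iff in Ew.
      assert (Nw : w <> s) by (intros ->; auto).
      rewrite (Fv w Nw ltac:(congruence)), <- Ew. reflexivity. }
    rewrite cyc3f_out by auto.
    destruct (Z.eq_dec (pf v x) x) as [Vx|Vx].
    + rewrite (pg_fixed v x Vx). destruct (Z.eq_dec (pf u x) x) as [Ux|Ux].
      * rewrite (pg_fixed u x Ux), Vx, Ux. reflexivity.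
      * remember (pg u x) as w eqn:Ew. apply eq_sym, pg_iff in Ew.
        assert (Nw : w <> s) by (intros ->; auto).
        rewrite (Fv w Nw ltac:(congruence)). now rewrite <- Ew.
    + remember (pg v x) as w eqn:Ew.
      apply eq_sym, pg_iff in Ew.
      assert (Nw : w <> s) by (intros ->; auto).
      rewrite (pg_fixed u w (Fu w Nw ltac:(congruence))), <- Ew, (Fu x n1 Vx).
      reflexivity.
Qed.

Lemma conj_cyc3 (h S : Sym Z) p q r : (forall y, pf S y = cyc3f p q r y) ->
  forall x, pf (gmul (gmul h S) (ginv h)) x = cyc3f (pf h p) (pf h q) (pf h r) x.
Proof.
  intros HS x. rewrite !pf_mul, pf_inv, HS. unfold cyc3f.
  destruct (Z.eq_dec (pg h x) p) as [E|E]; rewrite pg_iff in E;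
    destruct (Z.eq_dec x (pf h p)); try contradiction; auto.
  destruct (Z.eq_dec (pg h x) q) as [E'|E']; rewrite pg_iff in E';
    destruct (Z.eq_dec x (pf h q)); try contradiction; auto.
  destruct (Z.eq_dec (pg h x) r) as [E''|E'']; rewrite pg_iff in E'';
    destruct (Z.eq_dec x (pf h r)); try contradiction; auto.
  apply pfg.
Qed.

Lemma conj_swap (h S : Sym Z) p q : (forall y, pf S y = swapf p q y) ->
  forall x, pf (gmul (gmul h S) (ginv h)) x = swapf (pf h p) (pf h q) x.
Proof.
  intros HS x. rewrite !pf_mul, pf_inv, HS. unfold swapf.
  destruct (Z.eq_dec (pg h x) p) as [E|E]; rewrite pg_iff in E;
    destruct (Z.eq_dec x (pf h p)); try contradiction; auto.
  destruct (Z.eq_dec (pg h x) q) as [E'|E']; rewrite pg_iff in E';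
    destruct (Z.eq_dec x (pf h q)); try contradiction; auto.
  apply pfg.
Qed.

(* Permutations of {0,...,4}, encoded as the pair (image list, inverse image
   list) so that products, inverses and equality are computable. *)
Local Open Scope bool_scope.

Definition l5 := [0;1;2;3;4]%nat.
Definition mul5 (s t : list nat) : list nat := map (fun i => nth (nth i t 0) s 0) l5.
Definition P5 := (list nat * list nat)%type.
Definition pmul5 (p q : P5) : P5 := (mul5 (fst p) (fst q), mul5 (snd q) (snd p)).
Definition pinv5 (p : P5) : P5 := (snd p, fst p).
Definition pid5 : P5 := (l5, l5).
Fixpoint pow5 (p : P5) (n : nat) : P5 :=
  match n with O => pid5 | S n => pmul5 p (pow5 p n) end.
Definition pcomm5 p q := pmul5 (pmul5 (pinv5 p) (pinv5 q)) (pmul5 p q).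
Definition pconj5 (h s : P5) := pmul5 (pmul5 h s) (pinv5 h).
Fixpoint nat_list_eqb (s t : list nat) : bool :=
  match s, t with
  | [], [] => true
  | a :: s, b :: t => Nat.eqb a b && nat_list_eqb s t
  | _, _ => false
  end.
Definition peqb (p q : P5) : bool := nat_list_eqb (fst p) (fst q).

Definition valid5 (p : P5) : bool :=
  forallb (fun i => (nth i (fst p) 0 <? 5) && (nth i (snd p) 0 <? 5) &&
     (nth (nth i (snd p) 0) (fst p) 0 =? i) && (nth (nth i (fst p) 0) (snd p) 0 =? i))%nat l5.

Lemma forall_l5 (P : nat -> bool) :
  forallb P l5 = true -> forall i, (i < 5)%nat -> P i = true.
Proof.
  intros H i Hi. simpl in H. rewrite !Bool.andb_true_iff in H.
  destruct H as (? & ? & ? & ? & ? & _).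
  do 5 (destruct i as [|i]; [assumption|]). lia.
Qed.

Lemma nth_map_l5 (f : nat -> nat) i : (i < 5)%nat -> nth i (map f l5) 0%nat = f i.
Proof. intro Hi. do 5 (destruct i as [|i]; [reflexivity|]). lia. Qed.

Lemma nth_mul5 s t i : (i < 5)%nat -> nth i (mul5 s t) 0 = nth (nth i t 0) s 0.
Proof. apply (nth_map_l5 (fun i => nth (nth i t 0) s 0)). Qed.

Lemma valid5_spec p : valid5 p = true -> forall i, (i < 5)%nat ->
  (nth i (fst p) 0 < 5 /\ nth i (snd p) 0 < 5 /\
   nth (nth i (snd p) 0) (fst p) 0 = i /\ nth (nth i (fst p) 0) (snd p) 0 = i)%nat.
Proof.
  intros H i Hi. pose proof (forall_l5 _ H i Hi) as K. simpl in K.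
  rewrite !Bool.andb_true_iff, !Nat.ltb_lt, !Nat.eqb_eq in K. tauto.
Qed.

Lemma valid5_mul p q : valid5 p = true -> valid5 q = true -> valid5 (pmul5 p q) = true.
Proof.
  intros Hp Hq. unfold valid5. apply forallb_forall. intros i Hi.
  assert (Hi' : (i < 5)%nat) by (simpl in Hi; lia).
  destruct (valid5_spec q Hq i Hi') as (q1 & q2 & q3 & q4).
  destruct (valid5_spec p Hp _ q1) as (p1 & p2 & p3 & p4).
  destruct (valid5_spec p Hp i Hi') as (p1' & p2' & p3' & p4').
  destruct (valid5_spec q Hq _ p2') as (q1' & q2' & q3' & q4').
  unfold pmul5; simpl fst; simpl snd.
  repeat (rewrite nth_mul5 by lia).
  rewrite q3', p3', p4, q4.
  rewrite !Bool.andb_true_iff, !Nat.ltb_lt, !Nat.eqb_eq. lia.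
Qed.

Lemma valid5_inv p : valid5 p = true -> valid5 (pinv5 p) = true.
Proof.
  unfold valid5; rewrite !forallb_forall; intros H i Hi; specialize (H i Hi);
    simpl in *; rewrite !Bool.andb_true_iff in *; tauto.
Qed.

Lemma valid5_pow p n : valid5 p = true -> valid5 (pow5 p n) = true.
Proof. intro H; induction n; simpl; [reflexivity | apply valid5_mul; auto]. Qed.

Ltac valid5_tac := repeat match goal with
 | |- valid5 (pmul5 _ _) = true => apply valid5_mul
 | |- valid5 (pinv5 _) = true => apply valid5_inv
 | |- valid5 (pow5 _ _) = true => apply valid5_pow
 | H : valid5 ?p = true |- valid5 ?p = true => exact H
 end.

Definition on_block_fun (m : Z) (s : list nat) (x : Z) : Z :=
  if ((m <=? x) && (x <=? m + 4))%Z
  then (m + Z.of_nat (nth (Z.to_nat (x - m)) s 0%nat))%Z else x.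

Lemma on_block_in m s i : (i < 5)%nat ->
  on_block_fun m s (m + Z.of_nat i) = (m + Z.of_nat (nth i s 0%nat))%Z.
Proof.
  intro Hi. unfold on_block_fun.
  replace (m + Z.of_nat i - m)%Z with (Z.of_nat i) by lia. rewrite Nat2Z.id.
  replace ((m <=? m + Z.of_nat i) && (m + Z.of_nat i <=? m + 4))%Z with true;
    [reflexivity|].
  symmetry. rewrite Bool.andb_true_iff, !Z.leb_le. lia.
Qed.
Lemma on_block_out m s x : (x < m \/ m + 4 < x)%Z -> on_block_fun m s x = x.
Proof.
  intro H. unfold on_block_fun.
  replace ((m <=? x) && (x <=? m + 4))%Z with false; [reflexivity|].
  symmetry. apply Bool.andb_false_iff.
  destruct H; [left | right]; apply Z.leb_gt; lia.
Qed.
Lemma block_cases m x :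
  (x < m \/ m + 4 < x)%Z \/ exists i, (i < 5)%nat /\ x = (m + Z.of_nat i)%Z.
Proof.
  destruct (Z_lt_dec x m); [left; left; lia|].
  destruct (Z_lt_dec (m + 4) x); [left; right; lia|].
  right. exists (Z.to_nat (x - m)). split; lia.
Qed.

Lemma on_block_inv m p : valid5 p = true ->
  forall x, on_block_fun m (fst p) (on_block_fun m (snd p) x) = x.
Proof.
  intros H x. destruct (block_cases m x) as [Ho | (i & Hi & ->)].
  - rewrite !(on_block_out _ _ x Ho); reflexivity.
  - destruct (valid5_spec p H i Hi) as (h1 & h2 & h3 & h4).
    rewrite !on_block_in by lia. now rewrite h3.
Qed.

Lemma on_block_comp m s t x : (forall i, (i < 5)%nat -> nth i t 0 < 5)%nat ->
  on_block_fun m (mul5 s t) x = on_block_fun m s (on_block_fun m t x).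
Proof.
  intros Ht. destruct (block_cases m x) as [Ho | (i & Hi & ->)].
  - rewrite !(on_block_out _ _ x Ho); reflexivity.
  - rewrite !on_block_in, nth_mul5 by auto. reflexivity.
Qed.

(* on_block m p: the element of Sym Z acting as p on {m,...,m+4}
   (the identity if p is not a valid encoding). *)
Definition on_block_perm (m : Z) (p : P5) (H : valid5 p = true) : perm Z :=
  mkperm (on_block_fun m (fst p)) (on_block_fun m (snd p))
    (on_block_inv m p H) (on_block_inv m (pinv5 p) (valid5_inv p H)).

Definition on_block (m : Z) (p : P5) : Sym Z :=
  match valid5 p as b return valid5 p = b -> Sym Z with
  | true => fun H => on_block_perm m p H
  | false => fun _ => gone
  end eq_refl.

Lemma on_block_pf m p x : valid5 p = true -> pf (on_block m p) x = on_block_fun m (fst p) x.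
Proof.
  intro H. unfold on_block. generalize (@eq_refl bool (valid5 p)).
  pattern (valid5 p) at 2 3. rewrite H. intros. reflexivity.
Qed.

Lemma on_block_mul m p q : valid5 p = true -> valid5 q = true ->
  on_block m (pmul5 p q) = gmul (on_block m p) (on_block m q).
Proof.
  intros Hp Hq. apply perm_eq. intro x.
  rewrite pf_mul, !on_block_pf; auto using valid5_mul.
  apply on_block_comp. intros i Hi. apply (valid5_spec q Hq i Hi).
Qed.

Lemma on_block_inv5 m p : valid5 p = true -> on_block m (pinv5 p) = ginv (on_block m p).
Proof.
  intros Hp. apply perm_eq. intro x. rewrite pf_inv, !on_block_pf; auto using valid5_inv.
  unfold on_block. generalize (@eq_refl bool (valid5 p)). pattern (valid5 p) at 2 3.
  rewrite Hp. intros. reflexivity.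
Qed.

Lemma on_block_id m : on_block m pid5 = gone.
Proof.
  apply perm_eq. intro x. rewrite on_block_pf by reflexivity. simpl fst.
  destruct (block_cases m x) as [Ho | (i & Hi & ->)].
  - rewrite (on_block_out _ _ x Ho); reflexivity.
  - rewrite on_block_in by auto. do 5 (destruct i as [|i]; [reflexivity|]). lia.
Qed.

Lemma on_block_pow m p n : valid5 p = true -> on_block m (pow5 p n) = gpow (on_block m p) n.
Proof.
  intro H; induction n; simpl; [apply on_block_id|].
  rewrite on_block_mul by auto using valid5_pow. now rewrite IHn.
Qed.

Lemma on_block_peqb m p q : valid5 p = true -> valid5 q = true -> peqb p q = true ->
  on_block m p = on_block m q.
Proof.
  intros Hp Hq E. apply perm_eq. intro x. rewrite !on_block_pf by auto.
  replace (fst q) with (fst p); [reflexivity|].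
  unfold peqb in E. revert E. generalize (fst p) (fst q).
  induction l as [|a s IH]; intros [|b t]; simpl; try discriminate; auto.
  rewrite Bool.andb_true_iff, Nat.eqb_eq. intros [-> E]. f_equal; auto.
Qed.

Definition cyc5 (a b c : nat) : P5 :=
  (map (fun i => if Nat.eqb i a then b else if Nat.eqb i b then c
                 else if Nat.eqb i c then a else i) l5,
   map (fun i => if Nat.eqb i a then c else if Nat.eqb i b then a
                 else if Nat.eqb i c then b else i) l5).
Definition swap5 (a b : nat) : P5 :=
  let f := fun i => if Nat.eqb i a then b else if Nat.eqb i b then a else i in
  (map f l5, map f l5).

Lemma on_block_cyc5 m a b c :
  (a < 5)%nat -> (b < 5)%nat -> (c < 5)%nat -> a <> b -> b <> c -> a <> c ->
  valid5 (cyc5 a b c) = true ->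
  forall x, pf (on_block m (cyc5 a b c)) x
            = cyc3f (m + Z.of_nat a) (m + Z.of_nat b) (m + Z.of_nat c) x.
Proof.
  intros Ha Hb Hc ab bc ac Hok x. rewrite on_block_pf by auto. unfold cyc5; cbn [fst].
  destruct (block_cases m x) as [Ho | (i & Hi & ->)].
  - rewrite (on_block_out _ _ x Ho). rewrite cyc3f_out; lia.
  - rewrite on_block_in, nth_map_l5 by auto.
    destruct (Nat.eqb_spec i a); [subst; rewrite cyc3f_1; reflexivity|].
    destruct (Nat.eqb_spec i b); [subst; rewrite cyc3f_2 by lia; reflexivity|].
    destruct (Nat.eqb_spec i c); [subst; rewrite cyc3f_3 by lia; reflexivity|].
    rewrite cyc3f_out; lia.
Qed.

Lemma on_block_swap5 m a b : (a < 5)%nat -> (b < 5)%nat -> a <> b ->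
  valid5 (swap5 a b) = true ->
  forall x, pf (on_block m (swap5 a b)) x = swapf (m + Z.of_nat a) (m + Z.of_nat b) x.
Proof.
  intros Ha Hb ab Hok x. rewrite on_block_pf by auto. unfold swap5; cbn [fst].
  unfold swapf.
  destruct (block_cases m x) as [Ho | (i & Hi & ->)].
  - rewrite (on_block_out _ _ x Ho).
    repeat match goal with |- context [Z.eq_dec ?u ?v] => destruct (Z.eq_dec u v); [lia|] end.
    reflexivity.
  - rewrite on_block_in, nth_map_l5 by auto.
    destruct (Nat.eqb_spec i a); [subst; destruct (Z.eq_dec _ _); [reflexivity|lia]|].
    destruct (Z.eq_dec (m + Z.of_nat i) (m + Z.of_nat a)); [lia|].
    destruct (Nat.eqb_spec i b); [subst; destruct (Z.eq_dec _ _); [reflexivity|lia]|].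
    destruct (Z.eq_dec (m + Z.of_nat i) (m + Z.of_nat b)); [lia|]. reflexivity.
Qed.

Lemma on_block_cyc5_nontrivial m : on_block m (cyc5 0 1 2) <> gone.
Proof.
  intro E. assert (K := f_equal (fun p => pf p m) E). cbv beta in K.
  rewrite on_block_cyc5 in K by (try reflexivity; lia).
  replace (m + Z.of_nat 0)%Z with m in K by lia.
  rewrite cyc3f_1, pf_one in K. lia.
Qed.

Definition memb (p : P5) (L : list P5) := existsb (peqb p) L.
Definition incl_check (L M : list P5) := forallb (fun t => memb t M) L.
Definition addnew (L : list P5) (x : P5) := if memb x L then L else x :: L.
Definition candidates (gens conjs S : list P5) :=
  flat_map (fun g => map (pmul5 g) S) gens ++ flat_map (fun h => map (pconj5 h) S) conjs.
Definition clos_step gens conjs S := fold_left addnew (candidates gens conjs S) S.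
Fixpoint clos gens conjs n :=
  match n with O => gens | S n => clos_step gens conjs (clos gens conjs n) end.

Lemma memb_In p L : memb p L = true -> exists q, In q L /\ peqb p q = true.
Proof. unfold memb. rewrite existsb_exists. auto. Qed.

Lemma fold_addnew (P : P5 -> Prop) L S :
  (forall x, In x L -> P x) -> (forall x, In x S -> P x) ->
  forall x, In x (fold_left addnew L S) -> P x.
Proof.
  revert S; induction L; simpl; intros S HL HS; auto.
  apply IHL; auto. intros x Hx. unfold addnew in Hx. destruct (memb a S); auto.
  destruct Hx; subst; auto.
Qed.

Lemma clos_ind (P : P5 -> Prop) gens conjs :
  (forall g, In g gens -> P g) ->
  (forall g s, In g gens -> P s -> P (pmul5 g s)) ->
  (forall h s, In h conjs -> P s -> P (pconj5 h s)) ->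
  forall n x, In x (clos gens conjs n) -> P x.
Proof.
  intros H1 H2 H3 n. induction n; simpl; auto.
  unfold clos_step. apply fold_addnew; auto. unfold candidates. intros x Hx.
  apply in_app_or in Hx.
  destruct Hx as [Hx|Hx]; apply in_flat_map in Hx; destruct Hx as (g & Hg & Hx);
    apply in_map_iff in Hx; destruct Hx as (s & <- & Hs); auto.
Qed.

(* The nontrivial elements of the alternating group A5, obtained as the
   closure of (0 1 2) and (2 3 4), with the computational certificate that
   each of them is a commutator of two of them. *)
Definition A5 := clos [cyc5 0 1 2; cyc5 2 3 4] [] 6.
Definition perfect_check (L : list P5) :=
  forallb (fun t => existsb (fun t1 => existsb (fun t2 =>
    peqb (pcomm5 t1 t2) t) L) L) L.

Lemma A5_valid : forallb valid5 A5 = true. Proof. vm_compute. reflexivity. Qed.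
Lemma A5_perfect : perfect_check A5 = true. Proof. vm_compute. reflexivity. Qed.
Lemma A5_cyc5 : In (cyc5 0 1 2) A5. Proof. vm_compute. tauto. Qed.

Lemma not_solvable_of_A5_image (G H : Group) (f : G -> H) (hf : is_hom f)
  (F : Sym Z -> H) (hF : is_hom F) m gens conjs n
  (Hg : forall g, In g gens -> valid5 g = true /\ in_image f (F (on_block m g)))
  (Hc : forall h, In h conjs -> valid5 h = true /\
     (forall s, in_image f (F s) ->
        in_image f (F (gmul (gmul (on_block m h) s) (ginv (on_block m h))))))
  (Hi : incl_check A5 (clos gens conjs n) = true)
  (Hne : F (on_block m (cyc5 0 1 2)) <> gone) : ~ solvable G.
Proof.
  assert (HC : forall x, In x (clos gens conjs n) ->
            valid5 x = true /\ in_image f (F (on_block m x))).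
  { apply clos_ind; auto.
    - intros g s Hgi [Hs1 Hs2]. destruct (Hg g Hgi) as [Hg1 Hg2].
      split; [apply valid5_mul; auto|].
      rewrite on_block_mul, hF by auto. apply (in_image_mul hf); auto.
    - intros h s Hh [Hs1 Hs2]. destruct (Hc h Hh) as [Hh1 Hh2]. unfold pconj5.
      split; [valid5_tac|].
      rewrite !on_block_mul, on_block_inv5 by valid5_tac. apply Hh2; auto. }
  pose proof A5_valid as Hok. rewrite forallb_forall in Hok.
  apply (not_solvable_of_perfect_image G H f hf
           (fun t => exists s, In s A5 /\ t = F (on_block m s)))
    with (t0 := F (on_block m (cyc5 0 1 2))).
  - intros t (s & Hs & ->). unfold incl_check in Hi. rewrite forallb_forall in Hi.
    destruct (memb_In _ _ (Hi s Hs)) as (q & Hq & E). destruct (HC q Hq) as [Hq1 Hq2].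
    rewrite (on_block_peqb m s q (Hok s Hs) Hq1 E). exact Hq2.
  - intros t (s & Hs & ->). pose proof A5_perfect as P. unfold perfect_check in P.
    rewrite forallb_forall in P. specialize (P s Hs). rewrite existsb_exists in P.
    destruct P as (t1 & H1 & P). rewrite existsb_exists in P. destruct P as (t2 & H2 & E).
    exists (F (on_block m t1)), (F (on_block m t2)).
    split; [exists t1; split; [exact H1 | reflexivity]|].
    split; [exists t2; split; [exact H2 | reflexivity]|].
    assert (O1 := Hok t1 H1). assert (O2 := Hok t2 H2).
    assert (Oc : valid5 (pcomm5 t1 t2) = true) by (clear - O1 O2; unfold pcomm5; valid5_tac).
    rewrite <- (on_block_peqb m _ _ Oc (Hok s Hs) E); clear E Oc.
    unfold pcomm5, gcomm. rewrite !on_block_mul, !on_block_inv5 by valid5_tac.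
    rewrite !hF, !(hom_inv _ _ F hF). reflexivity.
  - exists (cyc5 0 1 2). split; [exact A5_cyc5 | reflexivity].
  - exact Hne.
Qed.

Local Open Scope Z_scope.

Definition rotf (n : nat) (x : Z) : Z :=
  if (0 <=? x) && (x <? Z.of_nat n) then (x + 1) mod Z.of_nat n else x.

Lemma rotf_in n x : 0 <= x < Z.of_nat n -> rotf n x = (x + 1) mod Z.of_nat n.
Proof.
  intro H. unfold rotf.
  replace ((0 <=? x) && (x <? Z.of_nat n)) with true; [reflexivity|].
  symmetry; rewrite Bool.andb_true_iff, Z.leb_le, Z.ltb_lt; lia.
Qed.
Lemma rotf_out n x : ~ (0 <= x < Z.of_nat n) -> rotf n x = x.
Proof.
  intro H. unfold rotf.
  replace ((0 <=? x) && (x <? Z.of_nat n)) with false; [reflexivity|].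
  symmetry; rewrite Bool.andb_false_iff, Z.leb_gt, Z.ltb_ge; lia.
Qed.

Lemma rotf_iter n x k : 0 <= x < Z.of_nat n ->
  Nat.iter k (rotf n) x = (x + Z.of_nat k) mod Z.of_nat n.
Proof.
  intro H. induction k; simpl Nat.iter.
  - rewrite Z.add_0_r, Z.mod_small; auto.
  - rewrite IHk, rotf_in by (apply Z.mod_pos_bound; lia).
    rewrite Zplus_mod_idemp_l. f_equal. lia.
Qed.
Lemma rotf_iter_out n x k : ~ (0 <= x < Z.of_nat n) -> Nat.iter k (rotf n) x = x.
Proof. intro H. induction k; simpl; auto. rewrite IHk. apply rotf_out; auto. Qed.

Lemma rotf_order n x : Nat.iter n (rotf n) x = x.
Proof.
  destruct (Z_le_dec 0 x); [destruct (Z_lt_dec x (Z.of_nat n))|];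
    [|apply rotf_iter_out; lia ..].
  rewrite rotf_iter by lia.
  rewrite Z.add_mod, Z.mod_same, Z.add_0_r, !Z.mod_mod, Z.mod_small; lia.
Qed.

Lemma rotf_order_pred n x : Nat.iter (S (n - 1)) (rotf n) x = x.
Proof.
  destruct n as [|n]; [apply rotf_out; lia|].
  replace (S (S n - 1)) with (S n) by lia. apply rotf_order.
Qed.

Definition rot (n : nat) : Sym Z := perm_of_order (rotf n) (n - 1) (rotf_order_pred n).

Lemma rot_order n : gpow (rot n) n = gone.
Proof. apply perm_eq. intro x. rewrite pf_pow. apply rotf_order. Qed.

Definition negation : Sym Z := mkperm Z.opp Z.opp Z.opp_involutive Z.opp_involutive.
Definition rot_neg (n : nat) : Sym Z := gmul (gmul negation (rot n)) (ginv negation).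

Lemma rot_pf_in n x : 0 <= x -> x + 1 < Z.of_nat n -> pf (rot n) x = x + 1.
Proof. intros H1 H2. simpl pf. rewrite rotf_in, Z.mod_small; lia. Qed.
Lemma rot_pf_neg n x : x < 0 -> pf (rot n) x = x.
Proof. intro H. simpl pf. apply rotf_out. lia. Qed.

Lemma rot_neg_pf n x : pf (rot_neg n) x = - rotf n (- x).
Proof. reflexivity. Qed.
Lemma rot_neg_pf_in n x : x <= 0 -> 1 - x < Z.of_nat n -> pf (rot_neg n) x = x - 1.
Proof. intros H1 H2. rewrite rot_neg_pf, rotf_in, Z.mod_small; lia. Qed.
Lemma rot_neg_pf_pos n x : 0 < x -> pf (rot_neg n) x = x.
Proof. intro H. rewrite rot_neg_pf, rotf_out; lia. Qed.

(* For j, k >= 2 the supports {0..j-1} and {-(k-1)..0} of the two rotations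
   meet only in 0, so their commutator is the 3-cycle (0 1 -1). *)
Lemma rot_comm_3cycle j k : (2 <= j)%nat -> (2 <= k)%nat ->
  forall w, pf (gmul (gmul (rot j) (rot_neg k)) (gmul (ginv (rot j)) (ginv (rot_neg k)))) w
            = cyc3f 0 1 (-1) w.
Proof.
  intros Hj Hk w. rewrite (comm_3cycle _ _ 0).
  - rewrite (rot_pf_in j 0), (rot_neg_pf_in k 0) by lia. reflexivity.
  - intros v Hv. rewrite rot_neg_pf. simpl pf. destruct (Z_le_dec 0 v).
    + right. rewrite rotf_out; lia.
    + left. apply rotf_out. lia.
  - rewrite (rot_pf_in j 0) by lia. lia.
  - rewrite (rot_neg_pf_in k 0) by lia. lia.
Qed.

Lemma rot_neg_order n : gpow (rot_neg n) n = gone.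
Proof. unfold rot_neg. rewrite gpow_conj, rot_order, gmul_1r, gmul_Vr. reflexivity. Qed.

Lemma on_block_order m p n : valid5 p = true -> peqb (pow5 p n) pid5 = true ->
  gpow (on_block m p) n = gone.
Proof.
  intros Hp E. rewrite <- on_block_pow, <- (on_block_id m) by auto.
  apply on_block_peqb; [valid5_tac | reflexivity | exact E].
Qed.

(* (2,2,l), l >= 4: take a = (-1 0) and c = rot l, so a a = 1 = c^l.  The
   conjugates c^i a c^-i = (-1 i), 0 <= i <= 3, generate S5 on {-1,...,3}. *)
Lemma not_solvable_22l (G : Group) (x y z : G) l :
  (4 <= l)%nat -> presents 2 2 l G x y z -> ~ solvable G.
Proof.
  intros Hl P.
  set (a := on_block (-1) (swap5 0 1)). set (c := rot l).
  assert (Ha2 : gpow a 2 = gone) by (apply on_block_order; reflexivity).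
  apply (not_solvable_of_relations _ _ _ G x y z P (Sym Z) a a c Ha2 Ha2).
  { transitivity (gpow a 2); [cbn [gpow]; rewrite gmul_1r; reflexivity|].
    rewrite Ha2. symmetry. apply rot_order. }
  intros f hf Ra _ Rc.
  assert (Swaps : forall i, (i < 4)%nat -> in_image f (on_block (-1) (swap5 0 (S i)))).
  { intros i Hi.
    assert (Hok : valid5 (swap5 0 (S i)) = true)
      by (do 4 (destruct i as [|i]; [reflexivity|]); lia).
    replace (on_block (-1) (swap5 0 (S i)))
      with (gmul (gmul (gpow c i) a) (ginv (gpow c i))).
    - apply (in_image_conj hf); auto. apply (in_image_pow hf); auto.
    - apply perm_eq. intro w. rewrite (conj_swap (gpow c i) a (-1) 0).
      + rewrite on_block_swap5 by (auto; lia). rewrite !pf_pow. unfold c; simpl pf.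
        rewrite rotf_iter_out, rotf_iter, Z.mod_small by lia.
        f_equal; lia.
      + intro v. unfold a. rewrite on_block_swap5 by (try reflexivity; lia). reflexivity. }
  apply (not_solvable_of_A5_image G (Sym Z) f hf (fun h => h) (id_hom _) (-1)
           [swap5 0 1; swap5 0 2; swap5 0 3; swap5 0 4] [] 8).
  - intros g Hg. simpl in Hg. destruct Hg as [<-|[<-|[<-|[<-|[]]]]];
      split; try reflexivity;
      [apply (Swaps 0%nat) | apply (Swaps 1%nat) | apply (Swaps 2%nat) | apply (Swaps 3%nat)];
      lia.
  - intros h [].
  - vm_compute. reflexivity.
  - apply on_block_cyc5_nontrivial.
Qed.

(* (2,2,3): a = (0 1)(2 3) and c = (0 2 4) are even, a a = 1 = c^3, and
   they generate A5. *)
Definition dbl_swap5 : P5 := ([1;0;3;2;4], [1;0;3;2;4])%nat.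

Lemma not_solvable_223 (G : Group) (x y z : G) :
  presents 2 2 3 G x y z -> ~ solvable G.
Proof.
  intros P.
  set (a := on_block 0 dbl_swap5). set (c := on_block 0 (cyc5 0 2 4)).
  assert (Ha2 : gpow a 2 = gone) by (apply on_block_order; reflexivity).
  apply (not_solvable_of_relations _ _ _ G x y z P (Sym Z) a a c Ha2 Ha2).
  { transitivity (gpow a 2); [cbn [gpow]; rewrite gmul_1r; reflexivity|].
    rewrite Ha2. symmetry. apply on_block_order; reflexivity. }
  intros f hf Ra _ Rc.
  apply (not_solvable_of_A5_image G (Sym Z) f hf (fun h => h) (id_hom _) 0
           [dbl_swap5; cyc5 0 2 4] [] 12).
  - intros g Hg. simpl in Hg. destruct Hg as [<-|[<-|[]]]; split; try reflexivity; auto.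
  - intros h [].
  - vm_compute; reflexivity.
  - apply on_block_cyc5_nontrivial.
Qed.

(* Thus
   (shift l e)^l = diag l e, and commutators of shift l e with diagonal
   elements are supported on the first copy. *)
Definition X := (nat * Z)%type.

Definition diagf (l : nat) (g : Z -> Z) (p : X) : X :=
  let (i, y) := p in if (i <? l)%nat then (i, g y) else (i, y).
Definition diag (l : nat) (g : Sym Z) : Sym X.
Proof.
  refine (mkperm (diagf l (pf g)) (diagf l (pg g)) _ _); intros [i y]; unfold diagf;
    destruct (i <? l)%nat eqn:E; rewrite ?E; try rewrite pfg; try rewrite pgf; reflexivity.
Defined.
Lemma diag_pf l g i y : pf (diag l g) (i, y) = if (i <? l)%nat then (i, pf g y) else (i, y).
Proof. reflexivity. Qed.

Definition firstf (g : Z -> Z) (p : X) : X :=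
  let (i, y) := p in if (i =? 0)%nat then (i, g y) else (i, y).
Definition first_copy (g : Sym Z) : Sym X.
Proof.
  refine (mkperm (firstf (pf g)) (firstf (pg g)) _ _); intros [i y]; unfold firstf;
    destruct (i =? 0)%nat eqn:E; rewrite ?E; try rewrite pfg; try rewrite pgf; reflexivity.
Defined.
Lemma first_copy_pf g i y :
  pf (first_copy g) (i, y) = if (i =? 0)%nat then (i, pf g y) else (i, y).
Proof. reflexivity. Qed.

Lemma diag_hom l : is_hom (diag l).
Proof.
  intros g h. apply perm_eq. intros [i y]. rewrite pf_mul, !diag_pf.
  destruct (i <? l)%nat eqn:E; rewrite diag_pf, E; reflexivity.
Qed.
Lemma first_copy_hom : is_hom first_copy.
Proof.
  intros g h. apply perm_eq. intros [i y]. rewrite pf_mul, !first_copy_pf.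
  destruct (i =? 0)%nat eqn:E; rewrite first_copy_pf, E; reflexivity.
Qed.

Lemma first_copy_nontrivial m : first_copy (on_block m (cyc5 0 1 2)) <> gone.
Proof.
  intro E. apply (on_block_cyc5_nontrivial m). apply perm_eq. intro w.
  assert (K := f_equal (fun p => pf p (0%nat, w)) E). cbv beta in K.
  rewrite first_copy_pf in K. injection K. auto.
Qed.

Definition shiftf (l : nat) (e : Z -> Z) (p : X) : X :=
  let (i, y) := p in
  if (S i <? l)%nat then (S i, y) else if (i <? l)%nat then (0%nat, e y) else (i, y).
Definition shiftg (l : nat) (e' : Z -> Z) (p : X) : X :=
  let (i, y) := p in
  match i with
  | O => if (0 <? l)%nat then (l - 1, e' y)%nat else (0%nat, y)
  | S i' => if (S i' <? l)%nat then (i', y) else (S i', y)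
  end.

Lemma shift_fg l (e : Sym Z) p : shiftf l (pf e) (shiftg l (pg e) p) = p.
Proof.
  destruct p as [[|i] y]; unfold shiftg.
  - destruct (Nat.ltb_spec 0 l); unfold shiftf.
    + destruct (Nat.ltb_spec (S (l - 1)) l); [lia|].
      destruct (Nat.ltb_spec (l - 1) l); [|lia]. rewrite pfg; reflexivity.
    + destruct (Nat.ltb_spec 1 l); [lia|]. destruct (Nat.ltb_spec 0 l); [lia|]. reflexivity.
  - destruct (Nat.ltb_spec (S i) l); unfold shiftf.
    + destruct (Nat.ltb_spec (S i) l); [reflexivity|lia].
    + destruct (Nat.ltb_spec (S (S i)) l); [lia|].
      destruct (Nat.ltb_spec (S i) l); [lia|]. reflexivity.
Qed.
Lemma shift_gf l (e : Sym Z) p : shiftg l (pg e) (shiftf l (pf e) p) = p.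
Proof.
  destruct p as [i y]. unfold shiftf. destruct (Nat.ltb_spec (S i) l).
  - unfold shiftg. destruct (Nat.ltb_spec (S i) l); [reflexivity|lia].
  - destruct (Nat.ltb_spec i l); unfold shiftg.
    + destruct (Nat.ltb_spec 0 l); [|lia]. rewrite pgf. f_equal. lia.
    + destruct i as [|i]; [destruct (Nat.ltb_spec 0 l); [lia|reflexivity]|].
      destruct (Nat.ltb_spec (S i) l); [lia|reflexivity].
Qed.
Definition shift (l : nat) (e : Sym Z) : Sym X :=
  mkperm (shiftf l (pf e)) (shiftg l (pg e)) (shift_fg l e) (shift_gf l e).
Lemma shift_pf l e i y : pf (shift l e) (i, y) =
  if (S i <? l)%nat then (S i, y) else if (i <? l)%nat then (0%nat, pf e y) else (i, y).
Proof. reflexivity. Qed.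

Lemma shift_iter l e k i y : (i + k < l)%nat ->
  Nat.iter k (pf (shift l e)) (i, y) = (i + k, y)%nat.
Proof.
  induction k; intro H; [simpl; f_equal; lia|].
  rewrite Nat.iter_succ, IHk, shift_pf by lia.
  destruct (Nat.ltb_spec (S (i + k)) l); [f_equal; lia | lia].
Qed.

Lemma shift_pow l e : (1 <= l)%nat -> gpow (shift l e) l = diag l e.
Proof.
  intro Hl. apply perm_eq. intros [i y]. rewrite pf_pow, diag_pf.
  destruct (Nat.ltb_spec i l) as [Hi|Hi].
  - (* l = i + (1 + (l-1-i)): go up to copy l-1, wrap around, then come back up to i *)
    transitivity (Nat.iter (i + S (l - 1 - i)) (pf (shift l e)) (i, y));
      [f_equal; lia|].
    rewrite Nat.iter_add, Nat.iter_succ, (shift_iter l e (l - 1 - i) i y) by lia.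
    rewrite shift_pf. replace (i + (l - 1 - i))%nat with (l - 1)%nat by lia.
    destruct (Nat.ltb_spec (S (l - 1)) l); [lia|].
    destruct (Nat.ltb_spec (l - 1) l); [|lia].
    rewrite (shift_iter l e i 0 (pf e y)) by lia. reflexivity.
  -
    assert (Fix : pf (shift l e) (i, y) = (i, y)).
    { rewrite shift_pf. destruct (Nat.ltb_spec (S i) l); [lia|].
      destruct (Nat.ltb_spec i l); [lia | reflexivity]. }
    generalize l at 1. intro n.
    induction n as [|n IH]; [reflexivity | rewrite Nat.iter_succ, IH; exact Fix].
Qed.

Lemma shift_diag_comm l e g : (1 <= l)%nat ->
  gmul (gmul (gmul (shift l e) (diag l g)) (ginv (shift l e))) (ginv (diag l g)) =
  first_copy (gmul (gmul (gmul e g) (ginv e)) (ginv g)).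
Proof.
  intro Hl. set (w := gmul (gmul (gmul e g) (ginv e)) (ginv g)).
  assert (E : gmul (shift l e) (diag l g)
              = gmul (gmul (first_copy w) (diag l g)) (shift l e)).
  { apply perm_eq. intros [i y]. rewrite !pf_mul, shift_pf, diag_pf.
    destruct (Nat.ltb_spec (S i) l).
    - destruct (Nat.ltb_spec i l); [|lia]. rewrite shift_pf.
      destruct (Nat.ltb_spec (S i) l); [|lia].
      rewrite diag_pf. destruct (Nat.ltb_spec (S i) l); [|lia].
      rewrite first_copy_pf. reflexivity.
    - destruct (Nat.ltb_spec i l).
      + rewrite shift_pf. destruct (Nat.ltb_spec (S i) l); [lia|].
        destruct (Nat.ltb_spec i l); [|lia].
        rewrite diag_pf. destruct (Nat.ltb_spec 0 l); [|lia]. rewrite first_copy_pf. simpl.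
        rewrite !pgf. reflexivity.
      + rewrite shift_pf. destruct (Nat.ltb_spec (S i) l); [lia|].
        destruct (Nat.ltb_spec i l); [lia|].
        rewrite diag_pf. destruct (Nat.ltb_spec i l); [lia|]. rewrite first_copy_pf.
        destruct (Nat.eqb_spec i 0); [lia | reflexivity]. }
  rewrite E, <- !gmul_assoc, gmul_Kr, gmul_Vr, gmul_1r. reflexivity.
Qed.

Lemma diag_conj_first_copy l h w : (1 <= l)%nat ->
  gmul (gmul (diag l h) (first_copy w)) (ginv (diag l h))
  = first_copy (gmul (gmul h w) (ginv h)).
Proof.
  intro Hl. apply perm_eq. intros [i y]. rewrite !pf_mul, pf_inv. simpl pg.
  unfold diagf. destruct (Nat.ltb_spec i l).
  - rewrite !first_copy_pf. destruct (Nat.eqb_spec i 0).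
    + rewrite diag_pf. destruct (Nat.ltb_spec i l); [|lia].
      rewrite !pf_mul, pf_inv. reflexivity.
    + rewrite diag_pf. destruct (Nat.ltb_spec i l); [|lia]. rewrite pfg. reflexivity.
  - rewrite !first_copy_pf. destruct (Nat.eqb_spec i 0); [lia|].
    rewrite diag_pf. destruct (Nat.ltb_spec i l); [lia | reflexivity].
Qed.

Lemma diag_one l : diag l gone = gone.
Proof. apply perm_eq. intros [i y]. rewrite diag_pf. destruct (i <? l)%nat; reflexivity. Qed.

Lemma not_solvable_of_wreath (G : Group) (x y z : G) j k l (a0 b0 : Sym Z) :
  (1 <= l)%nat -> gpow a0 j = gone -> gpow b0 k = gone -> presents j k l G x y z ->
  (forall f : G -> Sym X, is_hom f ->
    (forall g, in_image f (diag l g) ->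
       in_image f (first_copy
         (gmul (gmul (gmul (gmul a0 b0) g) (ginv (gmul a0 b0))) (ginv g)))) ->
    (forall h w, in_image f (diag l h) -> in_image f (first_copy w) ->
       in_image f (first_copy (gmul (gmul h w) (ginv h)))) ->
    in_image f (diag l a0) -> in_image f (diag l b0) -> ~ solvable G) ->
  ~ solvable G.
Proof.
  intros Hl Ha Hb P K.
  apply (not_solvable_of_relations _ _ _ G x y z P (Sym X)
           (diag l a0) (diag l b0) (shift l (gmul a0 b0))).
  - rewrite <- (hom_pow _ _ _ (diag_hom l)), Ha. apply diag_one.
  - rewrite <- (hom_pow _ _ _ (diag_hom l)), Hb. apply diag_one.
  - rewrite shift_pow by auto. symmetry. apply diag_hom.
  - intros f hf Ra Rb Rc. apply (K f hf); auto.
    + intros g Rg. rewrite <- (shift_diag_comm l) by auto.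
      apply (in_image_mul hf); [apply (in_image_conj hf) | apply (in_image_inv hf)]; auto.
    + intros h w Rh Rw. rewrite <- (diag_conj_first_copy l) by auto.
      apply (in_image_conj hf); auto.
Qed.

Definition comm_with (e a : P5) := pmul5 (pmul5 (pmul5 e a) (pinv5 e)) (pinv5 a).

Lemma not_solvable_of_wreath_A5 (G : Group) (x y z : G) j k l (al be : P5) n :
  (1 <= l)%nat -> valid5 al = true -> valid5 be = true ->
  peqb (pow5 al j) pid5 = true -> peqb (pow5 be k) pid5 = true ->
  incl_check A5 (clos [comm_with (pmul5 al be) al; comm_with (pmul5 al be) be] [al; be] n)
    = true ->
  presents j k l G x y z -> ~ solvable G.
Proof.
  intros Hl Oa Ob Pa Pb Hi P.
  assert (Ha : gpow (on_block 0 al) j = gone) by (apply on_block_order; auto).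
  assert (Hb : gpow (on_block 0 be) k = gone) by (apply on_block_order; auto).
  apply (not_solvable_of_wreath G x y z j k l _ _ Hl Ha Hb P).
  intros f hf R1 R2 Ra Rb.
  assert (Eg : forall g, valid5 g = true -> on_block 0 (comm_with (pmul5 al be) g) =
     gmul (gmul (gmul (gmul (on_block 0 al) (on_block 0 be)) (on_block 0 g))
            (ginv (gmul (on_block 0 al) (on_block 0 be)))) (ginv (on_block 0 g))).
  { intros g Og. unfold comm_with.
    rewrite !on_block_mul, !on_block_inv5, !on_block_mul by valid5_tac. reflexivity. }
  apply (not_solvable_of_A5_image G (Sym X) f hf first_copy first_copy_hom 0
           [comm_with (pmul5 al be) al; comm_with (pmul5 al be) be] [al; be] n).
  - intros g Hg. simpl in Hg.
    destruct Hg as [<-|[<-|[]]]; (split; [unfold comm_with; valid5_tac|]);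
      rewrite Eg by auto; apply R1; auto.
  - intros h Hh. simpl in Hh.
    destruct Hh as [<-|[<-|[]]]; (split; [auto|]); intros s Rs; apply R2; auto.
  - exact Hi.
  - apply first_copy_nontrivial.
Qed.

Definition cyc024 : P5 := cyc5 0 2 4.

Lemma not_solvable_23l (G : Group) (x y z : G) l :
  (1 <= l)%nat -> presents 2 3 l G x y z -> ~ solvable G.
Proof.
  intros Hl P.
  apply (not_solvable_of_wreath_A5 G x y z 2 3 l dbl_swap5 cyc024 12); auto;
    vm_compute; reflexivity.
Qed.
Lemma not_solvable_32l (G : Group) (x y z : G) l :
  (1 <= l)%nat -> presents 3 2 l G x y z -> ~ solvable G.
Proof.
  intros Hl P.
  apply (not_solvable_of_wreath_A5 G x y z 3 2 l cyc024 dbl_swap5 12); auto;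
    vm_compute; reflexivity.
Qed.

Section FirstCopyCycles.
Variables (G : Group) (f : G -> Sym X).
Hypothesis hf : is_hom f.

Definition cycle_in_image (p q r : Z) : Prop :=
  exists S : Sym Z, in_image f (first_copy S) /\ forall w, pf S w = cyc3f p q r w.

Lemma cycle_in_image_ext p q r p' q' r' :
  cycle_in_image p q r -> p = p' -> q = q' -> r = r' -> cycle_in_image p' q' r'.
Proof. intros H -> -> ->. exact H. Qed.

Lemma cycle_in_image_conj l (h : Sym Z) p q r :
  (forall h w, in_image f (diag l h) -> in_image f (first_copy w) ->
     in_image f (first_copy (gmul (gmul h w) (ginv h)))) ->
  in_image f (diag l h) -> cycle_in_image p q r ->
  cycle_in_image (pf h p) (pf h q) (pf h r).
Proof.
  intros R2 Rh (S & RS & HS). exists (gmul (gmul h S) (ginv h)).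
  split; auto. apply conj_cyc3; auto.
Qed.

Definition cycle_ok (t : nat * nat * nat) : bool :=
  let '(a, b, c) := t in
  (a <? 5)%nat && (b <? 5)%nat && (c <? 5)%nat &&
  negb (a =? b)%nat && negb (b =? c)%nat && negb (a =? c)%nat && valid5 (cyc5 a b c).
Definition cyc5_of (t : nat * nat * nat) : P5 := let '(a, b, c) := t in cyc5 a b c.

Lemma not_solvable_of_cycles m ts n :
  forallb cycle_ok ts = true ->
  incl_check A5 (clos (map cyc5_of ts) [] n) = true ->
  (forall a b c, In (a, b, c) ts ->
     cycle_in_image (m + Z.of_nat a) (m + Z.of_nat b) (m + Z.of_nat c)) ->
  ~ solvable G.
Proof.
  intros Hok Hi Hcyc.
  apply (not_solvable_of_A5_image G (Sym X) f hf first_copy first_copy_hom m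
           (map cyc5_of ts) [] n); [|intros h []|exact Hi|apply first_copy_nontrivial].
  intros g Hg. apply in_map_iff in Hg. destruct Hg as ([[a b] c] & <- & Ht).
  rewrite forallb_forall in Hok. specialize (Hok _ Ht). simpl in Hok |- *.
  rewrite !Bool.andb_true_iff, !Bool.negb_true_iff, !Nat.ltb_lt, !Nat.eqb_neq in Hok.
  destruct Hok as ((((((Ha & Hb) & Hc) & ab) & bc) & ac) & Hv).
  split; [exact Hv|].
  destruct (Hcyc a b c Ht) as (S & RS & HS).
  replace (on_block m (cyc5 a b c)) with S; [exact RS|].
  apply perm_eq. intro w. rewrite HS, on_block_cyc5; auto.
Qed.
End FirstCopyCycles.

(* From the 3-cycle (0 1 -1) and its conjugates by the two rotations we get
   three 3-cycles generating A5 on a block of five points. *)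
Section RotationCases.
Variables (G : Group) (f : G -> Sym X) (j k : nat).
Hypothesis hf : is_hom f.
Hypothesis Base : cycle_in_image G f 0 1 (-1).
Hypothesis Ca : forall p q r, cycle_in_image G f p q r ->
  cycle_in_image G f (pf (rot j) p) (pf (rot j) q) (pf (rot j) r).
Hypothesis Cb : forall p q r, cycle_in_image G f p q r ->
  cycle_in_image G f (pf (rot_neg k) p) (pf (rot_neg k) q) (pf (rot_neg k) r).

(* j, k >= 3: (0 1 -1), (1 2 -1), (-1 1 -2) on the block {-2,...,2}. *)
Lemma not_solvable_rot_33 : (3 <= j)%nat -> (3 <= k)%nat -> ~ solvable G.
Proof.
  intros Hj Hk.
  apply (not_solvable_of_cycles G f hf (-2) [(2,3,1); (3,4,1); (1,3,0)]%nat 12);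
    [vm_compute; reflexivity .. |].
  intros a b c H. simpl in H. destruct H as [E|[E|[E|[]]]]; injection E as <- <- <-.
  - apply (cycle_in_image_ext _ _ _ _ _ _ _ _ Base); lia.
  - apply (cycle_in_image_ext _ _ _ _ _ _ _ _ (Ca _ _ _ Base));
      rewrite ?rot_pf_in, ?rot_pf_neg by lia; lia.
  - apply (cycle_in_image_ext _ _ _ _ _ _ _ _ (Cb _ _ _ Base));
      rewrite ?rot_neg_pf_in, ?rot_neg_pf_pos by lia; lia.
Qed.

(* j >= 4: (0 1 -1), (1 2 -1), (2 3 -1) on the block {-1,...,3}. *)
Lemma not_solvable_rot_4 : (4 <= j)%nat -> ~ solvable G.
Proof.
  intros Hj.
  assert (B1 : cycle_in_image G f 1 2 (-1)).
  { apply (cycle_in_image_ext _ _ _ _ _ _ _ _ (Ca _ _ _ Base));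
      rewrite ?rot_pf_in, ?rot_pf_neg by lia; lia. }
  apply (not_solvable_of_cycles G f hf (-1) [(1,2,0); (2,3,0); (3,4,0)]%nat 12);
    [vm_compute; reflexivity .. |].
  intros a b c H. simpl in H. destruct H as [E|[E|[E|[]]]]; injection E as <- <- <-.
  - apply (cycle_in_image_ext _ _ _ _ _ _ _ _ Base); lia.
  - apply (cycle_in_image_ext _ _ _ _ _ _ _ _ B1); lia.
  - apply (cycle_in_image_ext _ _ _ _ _ _ _ _ (Ca _ _ _ B1));
      rewrite ?rot_pf_in, ?rot_pf_neg by lia; lia.
Qed.

(* k >= 4: (0 1 -1), (-1 1 -2), (-2 1 -3) on the block {-3,...,1}. *)
Lemma not_solvable_rot_neg_4 : (4 <= k)%nat -> ~ solvable G.
Proof.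
  intros Hk.
  assert (B1 : cycle_in_image G f (-1) 1 (-2)).
  { apply (cycle_in_image_ext _ _ _ _ _ _ _ _ (Cb _ _ _ Base));
      rewrite ?rot_neg_pf_in, ?rot_neg_pf_pos by lia; lia. }
  apply (not_solvable_of_cycles G f hf (-3) [(3,4,2); (2,4,1); (1,4,0)]%nat 12);
    [vm_compute; reflexivity .. |].
  intros a b c H. simpl in H. destruct H as [E|[E|[E|[]]]]; injection E as <- <- <-.
  - apply (cycle_in_image_ext _ _ _ _ _ _ _ _ Base); lia.
  - apply (cycle_in_image_ext _ _ _ _ _ _ _ _ B1); lia.
  - apply (cycle_in_image_ext _ _ _ _ _ _ _ _ (Cb _ _ _ B1));
      rewrite ?rot_neg_pf_in, ?rot_neg_pf_pos by lia; lia.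
Qed.
End RotationCases.

(* a = rot j and b = rot_neg k in the wreath construction: the commutator
   [rot j, rot_neg k] = (0 1 -1) lands on the first copy. *)
Lemma not_solvable_jkl (G : Group) (x y z : G) j k l :
  (1 <= l)%nat ->
  ((3 <= j)%nat /\ (3 <= k)%nat \/ (4 <= j)%nat /\ k = 2%nat \/ j = 2%nat /\ (4 <= k)%nat) ->
  presents j k l G x y z -> ~ solvable G.
Proof.
  intros Hl Hc P.
  assert (Hj : (2 <= j)%nat) by lia. assert (Hk : (2 <= k)%nat) by lia.
  apply (not_solvable_of_wreath G x y z j k l (rot j) (rot_neg k) Hl
           (rot_order j) (rot_neg_order k) P).
  intros f hf R1 R2 Ra Rb.
  assert (Base : cycle_in_image G f 0 1 (-1)).
  { exists (gmul (gmul (rot j) (rot_neg k)) (gmul (ginv (rot j)) (ginv (rot_neg k)))).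
    split; [|apply rot_comm_3cycle; auto].
    rewrite (comm_as_conj (Sym Z)). apply R1, Rb. }
  pose proof (fun p q r => cycle_in_image_conj G f l (rot j) p q r R2 Ra) as Ca.
  pose proof (fun p q r => cycle_in_image_conj G f l (rot_neg k) p q r R2 Rb) as Cb.
  destruct Hc as [[Hj3 Hk3] | [[Hj4 _] | [_ Hk4]]].
  - exact (not_solvable_rot_33 G f j k hf Base Ca Cb Hj3 Hk3).
  - exact (not_solvable_rot_4 G f j hf Base Ca Hj4).
  - exact (not_solvable_rot_neg_4 G f k hf Base Cb Hk4).
Qed.
Section Subgroups.
Variable G : Group.

Lemma gzpow_nat (a : G) n : gzpow a (Z.of_nat n) = gpow a n.
Proof. destruct n; [reflexivity|]. simpl. rewrite SuccNat2Pos.id_succ. reflexivity. Qed.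
Lemma gzpow_negnat (a : G) n : gzpow a (- Z.of_nat n) = ginv (gpow a n).
Proof. destruct n; simpl. symmetry; apply ginv_one. rewrite SuccNat2Pos.id_succ. reflexivity. Qed.

Lemma gzpow_succ (a : G) m : gzpow a (Z.succ m) = gmul a (gzpow a m).
Proof.
  destruct (Z_le_dec 0 m).
  - replace m with (Z.of_nat (Z.to_nat m)) by lia. rewrite <- Nat2Z.inj_succ, !gzpow_nat. reflexivity.
  - replace m with (- Z.of_nat (S (Z.to_nat (- m) - 1))) by lia.
    replace (Z.succ (- Z.of_nat (S (Z.to_nat (- m) - 1)))) with (- Z.of_nat (Z.to_nat (- m) - 1)) by lia.
    rewrite !gzpow_negnat. set (n0 := (Z.to_nat (- m) - 1)%nat). simpl gpow.
    rewrite ginv_mul. rewrite gmul_assoc.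
    assert (C : gmul a (ginv (gpow a n0)) = gmul (ginv (gpow a n0)) a).
    { apply (gmul_cancel_l _ (gpow a n0)). rewrite gmul_assoc, <- gpow_comm, <- gmul_assoc, gmul_Vr, gmul_1r.
      rewrite gmul_assoc, gmul_Vr, gmul_1l. reflexivity. }
    rewrite C, <- gmul_assoc, gmul_Vr, gmul_1r. reflexivity.
Qed.
Lemma gzpow_pred (a : G) m : gzpow a (Z.pred m) = gmul (ginv a) (gzpow a m).
Proof. rewrite <- (Z.succ_pred m) at 2. rewrite gzpow_succ, gmul_Kl. reflexivity. Qed.

Lemma gzpow_add (a : G) m n : gzpow a (m + n) = gmul (gzpow a m) (gzpow a n).
Proof. revert n. induction m using Z.peano_ind; intro n.
  - simpl. now rewrite gmul_1l.
  - rewrite Z.add_succ_l, !gzpow_succ, IHm. apply gmul_assoc.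
  - rewrite Z.add_pred_l, !gzpow_pred, IHm. apply gmul_assoc.
Qed.
Lemma gzpow_opp (a : G) m : gzpow a (- m) = ginv (gzpow a m).
Proof. apply ginv_uniq. rewrite <- gzpow_add. replace (-m + m)%Z with 0%Z by lia. reflexivity. Qed.
Lemma gzpow_1 (a : G) : gzpow a 1 = a.
Proof. simpl. apply gmul_1r. Qed.

Lemma gzpow_gen (S : G -> Prop) (a : G) m : gen S a -> gen S (gzpow a m).
Proof. intro Ha. assert (K : forall n, gen S (gpow a n)).
  { induction n; simpl; [apply gen_one|apply gen_mul; auto]. }
  destruct m; simpl; [apply gen_one|auto|apply gen_inv; auto]. Qed.

Lemma gen_cyclic (a g : G) : gen (fun w => w = a) g -> exists m, g = gzpow a m.
Proof. intro H. induction H.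
  - exists 1%Z. subst. symmetry; apply gzpow_1.
  - exists 0%Z. reflexivity.
  - destruct IHgen1 as [m1 ->], IHgen2 as [m2 ->]. exists (m1 + m2)%Z. symmetry; apply gzpow_add.
  - destruct IHgen as [m ->]. exists (- m)%Z. symmetry; apply gzpow_opp.
Qed.

Lemma gen_mono (S1 S2 : G -> Prop) :
  (forall a, S1 a -> S2 a) -> forall a, gen S1 a -> gen S2 a.
Proof.
  intros H a Ha. induction Ha; [apply gen_in; auto | apply gen_one | apply gen_mul | apply gen_inv];
    auto.
Qed.

Definition conjg (h g : G) := gmul (gmul (ginv h) g) h.
Definition normalizes (S : G -> Prop) (h : G) :=
  (forall g, gen S g -> gen S (conjg h g)) /\ (forall g, gen S g -> gen S (conjg (ginv h) g)).

Lemma conjg_hom (h : G) : is_hom (conjg h).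
Proof. intros a b. unfold conjg. rewrite !gmul_assoc. f_equal.
  rewrite <- !gmul_assoc. f_equal. f_equal. rewrite gmul_assoc, gmul_Vr, gmul_1l. reflexivity. Qed.

Lemma conj_gen (S : G -> Prop) (h : G) : (forall s, S s -> gen S (conjg h s)) -> forall g, gen S g -> gen S (conjg h g).
Proof. intros Hs g Hg. induction Hg.
  - auto.
  - unfold conjg. rewrite gmul_1r, gmul_Vl. apply gen_one.
  - rewrite conjg_hom. apply gen_mul; auto.
  - rewrite (hom_inv _ _ _ (conjg_hom h)). apply gen_inv; auto.
Qed.

Lemma normalizes_gen_in (S : G -> Prop) (h : G) : gen S h -> normalizes S h.
Proof. intro Hh. split; intros g Hg; unfold conjg; repeat apply gen_mul; auto using gen_inv.
  Qed.

Lemma normalizes_closed (S T : G -> Prop) : (forall t, T t -> normalizes S t) -> forall h, gen T h -> normalizes S h.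
Proof. intros HT h Hh. induction Hh.
  - auto.
  - split; intros g Hg; unfold conjg; rewrite ?ginv_one, gmul_1l, gmul_1r; auto.
  - destruct IHHh1 as [A1 B1], IHHh2 as [A2 B2]. split; intros g Hg.
    + replace (conjg (gmul a b) g) with (conjg b (conjg a g)); auto.
      unfold conjg. rewrite ginv_mul, !gmul_assoc. reflexivity.
    + replace (conjg (ginv (gmul a b)) g) with (conjg (ginv a) (conjg (ginv b) g)); auto.
      unfold conjg. rewrite !ginv_inv, ginv_mul, !gmul_assoc. reflexivity.
  - destruct IHHh as [A B]. split; auto. rewrite ginv_inv. auto.
Qed.

Lemma cyclic_quotient (S T : G -> Prop) (a : G) :
  (forall s, T s -> exists m, gen S (gmul (ginv (gzpow a m)) s)) ->
  (forall m, normalizes S (gzpow a m)) ->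
  forall g, gen T g -> exists m, gen S (gmul (ginv (gzpow a m)) g).
Proof. intros HT HN g Hg. induction Hg.
  - auto.
  - exists 0%Z. simpl. rewrite ginv_one, gmul_1l. apply gen_one.
  - destruct IHHg1 as [m1 H1], IHHg2 as [m2 H2]. exists (m1 + m2)%Z.
    rewrite gzpow_add, ginv_mul.
    replace (gmul (gmul (ginv (gzpow a m2)) (ginv (gzpow a m1))) (gmul a0 b))
      with (gmul (conjg (gzpow a m2) (gmul (ginv (gzpow a m1)) a0)) (gmul (ginv (gzpow a m2)) b)).
    + apply gen_mul; auto. apply (HN m2); auto.
    + unfold conjg. rewrite !gmul_assoc. rewrite <- (gmul_assoc _ _ (gzpow a m2) (ginv (gzpow a m2))), gmul_Vr, gmul_1r.
      reflexivity.
  - destruct IHHg as [m Hm]. exists (- m)%Z. rewrite gzpow_opp, ginv_inv.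
    replace (gmul (gzpow a m) (ginv a0)) with (conjg (ginv (gzpow a m)) (ginv (gmul (ginv (gzpow a m)) a0))).
    + apply (HN m). apply gen_inv; auto.
    + unfold conjg. rewrite !ginv_inv, ginv_mul, ginv_inv, !gmul_assoc.
      rewrite <- (gmul_assoc _ _ (gzpow a m) (ginv (gzpow a m))), gmul_Vr, gmul_1r. reflexivity.
Qed.

End Subgroups.

Section Subgroup.
Variable G : Group.
Variable S : G -> Prop.
Definition SubT := {g : G | gen S g}.
Lemma sub_eq (a b : SubT) : proj1_sig a = proj1_sig b -> a = b.
Proof. destruct a, b; simpl; intros ->; f_equal; apply proof_irrelevance. Qed.
Definition smul (a b : SubT) : SubT := exist _ _ (gen_mul S _ _ (proj2_sig a) (proj2_sig b)).
Definition sinv (a : SubT) : SubT := exist _ _ (gen_inv S _ (proj2_sig a)).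
Definition sone : SubT := exist _ _ (gen_one S).
Definition SubG : Group.
Proof. refine (Build_Group SubT smul sinv sone _ _ _); intros; apply sub_eq; simpl.
  apply gmul_assoc. apply gmul_1l. apply gmul_Vl. Defined.
Lemma sub_pow (a : SubG) n : proj1_sig (gpow a n) = gpow (proj1_sig a) n.
Proof. induction n; simpl; auto. rewrite <- IHn. reflexivity. Qed.
End Subgroup.

(* A presented group is generated by its generators: by the uniqueness part
   of the universal property, the identity of G factors through <x, y, z>. *)
Lemma presents_generated j k l (G : Group) (x y z : G) : presents j k l G x y z ->
  forall g, gen (fun w => w = x \/ w = y \/ w = z) g.
Proof.
  intro P. pose proof P as (Px & Py & Pz & U).
  set (S0 := fun w => w = x \/ w = y \/ w = z).
  set (a := exist _ x (gen_in S0 x (or_introl eq_refl)) : SubG G S0).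
  set (b := exist _ y (gen_in S0 y (or_intror (or_introl eq_refl))) : SubG G S0).
  set (c := exist _ z (gen_in S0 z (or_intror (or_intror eq_refl))) : SubG G S0).
  destruct (U (SubG G S0) a b c) as (f & hf & fx & fy & fz & _).
  - apply sub_eq. rewrite sub_pow. exact Px.
  - apply sub_eq. rewrite sub_pow. exact Py.
  - apply sub_eq. rewrite sub_pow. exact Pz.
  - destruct (U G x y z Px Py Pz) as (f0 & hf0 & _ & _ & _ & Uf0).
    intro g.
    assert (E1 : g = f0 g) by (apply (Uf0 (fun w => w)); auto; intros ? ?; reflexivity).
    assert (E2 : proj1_sig (f g) = f0 g).
    { apply (Uf0 (fun w => proj1_sig (f w))).
      - intros u v. rewrite hf. reflexivity.
      - rewrite fx. reflexivity.
      - rewrite fy. reflexivity.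
      - rewrite fz. reflexivity. }
    rewrite E1, <- E2. exact (proj2_sig (f g)).
Qed.


Section PolycyclicSolvable.
Variable G : Group.

Lemma gzpow_in_subgroup (A : G -> Prop) (t : G) m :
  is_subgroup A -> A t -> A (gzpow t m).
Proof.
  intros (A1 & AM & AV) At.
  assert (K : forall k, A (gpow t k)) by (induction k; simpl; auto).
  destruct m; simpl; auto.
Qed.

Lemma trivial_is_subgroup (B : G -> Prop) : (forall g, B g <-> g = gone) -> is_subgroup B.
Proof.
  intro HB. repeat split.
  - apply HB. reflexivity.
  - intros a b Ha Hb. apply HB in Ha, Hb. subst. apply HB, gmul_1l.
  - intros a Ha. apply HB in Ha. subst. apply HB, ginv_one.
Qed.

(* If B is normal in A and A/B is cyclic (generated by t), then commutators
   of elements of A lie in B: writing a = t^m n1 and b = t^p n2 with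
   n1, n2 in B, the powers of t cancel out of [a, b]. *)
Lemma comm_in_cyclic_kernel (A B : G -> Prop) (t : G) :
  is_subgroup B ->
  (forall g h, B g -> A h -> B (gmul (ginv h) (gmul g h))) ->
  (forall m, A (gzpow t m)) ->
  (forall g, A g -> exists m, B (gmul (ginv (gzpow t m)) g)) ->
  forall a b, A a -> A b -> B (gcomm a b).
Proof.
  intros (B1 & BM & BV) Hnorm Apow Hcyc a b Ha Hb.
  destruct (Hcyc a Ha) as (m & Hm). destruct (Hcyc b Hb) as (p & Hp).
  set (T := gzpow t m) in *. set (Q := gzpow t p) in *.
  set (n1 := gmul (ginv T) a) in *. set (n2 := gmul (ginv Q) b) in *.
  assert (Ea : a = gmul T n1) by (unfold n1; rewrite gmul_Kr; reflexivity).
  assert (Eb : b = gmul Q n2) by (unfold n2; rewrite gmul_Kr; reflexivity).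
  assert (CQ : gmul (ginv Q) T = gmul T (ginv Q)).
  { assert (QT : gmul Q T = gmul T Q)
      by (unfold Q, T; rewrite <- !gzpow_add, Z.add_comm; reflexivity).
    apply (gmul_cancel_l _ Q). rewrite gmul_assoc, gmul_Vr, gmul_1l.
    rewrite gmul_assoc, QT, <- gmul_assoc, gmul_Vr, gmul_1r. reflexivity. }
  assert (E : gcomm a b = gmul (gmul (gmul (ginv n1) (gmul (ginv T) (gmul (ginv n2) T)))
                                      (gmul (ginv Q) (gmul n1 Q))) n2).
  { unfold gcomm. rewrite Ea, Eb, !ginv_mul, !gmul_assoc.
    rewrite <- (gmul_assoc _ _ (ginv Q) T), CQ, !gmul_assoc. reflexivity. }
  rewrite E. apply BM; [apply BM; [apply BM|]|]; auto; apply Hnorm; auto; apply Apow.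
Qed.

(* Along a polycyclic series the i-th derived subgroup lies in the i-th
   term, so the derived series reaches 1 after n steps. *)
Lemma polycyclic_solvable : polycyclic G -> solvable G.
Proof.
  intros (n & H & H0 & Hn & Hsub & Hnest & Hnorm & Hcyc).
  assert (Sub : forall i, (i <= n)%nat -> is_subgroup (H i)).
  { intros i Hi. destruct (Nat.eq_dec i n) as [->|Ne];
      [apply trivial_is_subgroup, Hn | apply Hsub; lia]. }
  assert (Der : forall i g, (i <= n)%nat -> derived i g -> H i g).
  { induction i; intros g Hi Hd; [apply H0|].
    destruct (Sub (S i) Hi) as (C1 & C2 & C3).
    simpl in Hd. induction Hd as [g (a & b & Ha & Hb & ->)| | |]; auto.
    destruct (Hcyc i ltac:(lia)) as (t & Ht & Hg).
    apply (comm_in_cyclic_kernel (H i) (H (S i)) t).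
    - apply Sub; lia.
    - apply Hnorm; lia.
    - intro m. apply gzpow_in_subgroup; [apply Sub; lia | exact Ht].
    - exact Hg.
    - apply IHi; auto; lia.
    - apply IHi; auto; lia. }
  exists n. intros g Hg. apply Hn, Der; auto.
Qed.
End PolycyclicSolvable.

(* G_{2,2,2}: with t = xy and u = xz the relations give
   x^-1 u x = t u^-1, x^-1 t x = t^-1, z^-1 u z = u^-1 t, z^-1 t z = t,
   u^-1 t u = t^-1 and y = x t.  Hence <u, t> is normal in G with G/<u, t>
   generated by x, and <t> is normal in <u, t> with quotient generated by u. *)
Section Presentation222.
Variable G : Group.
Variables x y z : G.
Hypothesis Px : gmul x x = gone.
Hypothesis Py : gmul y y = gone.
Hypothesis Pz : gmul x y = gmul z z.

Lemma x_inv : ginv x = x. Proof. symmetry; apply ginv_uniq; exact Px. Qed.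
Lemma y_inv : ginv y = y. Proof. symmetry; apply ginv_uniq; exact Py. Qed.
Lemma xxK b : gmul x (gmul x b) = b. Proof. rewrite gmul_assoc, Px, gmul_1l. reflexivity. Qed.
Lemma yyK b : gmul y (gmul y b) = b. Proof. rewrite gmul_assoc, Py, gmul_1l. reflexivity. Qed.
Lemma zzK b : gmul z (gmul z b) = gmul x (gmul y b). Proof. rewrite !gmul_assoc, Pz. reflexivity. Qed.
Lemma xyzK b : gmul x (gmul y (gmul (ginv z) b)) = gmul z b.
Proof. rewrite !gmul_assoc, Pz, <- (gmul_assoc _ z z), gmul_Vr, gmul_1r. reflexivity. Qed.
Lemma xyz : gmul x (gmul y (ginv z)) = z.
Proof. rewrite gmul_assoc, Pz, <- gmul_assoc, gmul_Vr, gmul_1r. reflexivity. Qed.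

(* z commutes with xy = z^2 and with yx = z^-2. *)
Lemma z_xy_comm : gmul z (gmul x y) = gmul (gmul x y) z.
Proof. rewrite Pz, !gmul_assoc. reflexivity. Qed.
Lemma zixyK b : gmul (ginv z) (gmul x (gmul y b)) = gmul x (gmul y (gmul (ginv z) b)).
Proof.
  apply (gmul_cancel_l _ z). rewrite gmul_Kr.
  rewrite (gmul_assoc _ x y (gmul (ginv z) b)), (gmul_assoc _ z (gmul x y)), z_xy_comm,
    <- gmul_assoc, gmul_Kr, gmul_assoc.
  reflexivity.
Qed.
Lemma zixy : gmul (ginv z) (gmul x y) = gmul x (gmul y (ginv z)).
Proof. rewrite <- (gmul_1r _ y) at 1. rewrite zixyK, gmul_1r. reflexivity. Qed.
Lemma yx : gmul y x = ginv (gmul z z).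
Proof. rewrite <- Pz, ginv_mul, x_inv, y_inv. reflexivity. Qed.
Lemma z_yx_comm : gmul z (gmul y x) = gmul (gmul y x) z.
Proof. rewrite yx, ginv_mul, gmul_Kr, <- gmul_assoc, gmul_Vl, gmul_1r. reflexivity. Qed.
Lemma ziyxK b : gmul (ginv z) (gmul y (gmul x b)) = gmul y (gmul x (gmul (ginv z) b)).
Proof.
  apply (gmul_cancel_l _ z). rewrite gmul_Kr.
  rewrite (gmul_assoc _ y x (gmul (ginv z) b)), (gmul_assoc _ z (gmul y x)), z_yx_comm,
    <- gmul_assoc, gmul_Kr, gmul_assoc.
  reflexivity.
Qed.

Ltac simpl222 := repeat (first [rewrite <- gmul_assoc | rewrite ginv_mul | rewrite ginv_inv
  | rewrite gmul_Kl | rewrite gmul_Kr | rewrite gmul_Vr | rewrite gmul_Vl | rewrite gmul_1l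
  | rewrite gmul_1r | rewrite ginv_one | rewrite x_inv | rewrite y_inv | rewrite xxK | rewrite yyK
  | rewrite Px | rewrite Py | rewrite zzK | rewrite <- Pz | rewrite xyzK | rewrite xyz
  | rewrite zixyK | rewrite zixy | rewrite ziyxK]).

Let t := gmul x y.
Let u := gmul x z.

Lemma conj_x_u : conjg G x u = gmul t (ginv u). Proof. unfold conjg, t, u. simpl222. reflexivity. Qed.
Lemma conj_x_t : conjg G x t = ginv t. Proof. unfold conjg, t. simpl222. reflexivity. Qed.
Lemma conj_z_u : conjg G z u = gmul (ginv u) t. Proof. unfold conjg, t, u. simpl222. reflexivity. Qed.
Lemma conj_z_t : conjg G z t = t. Proof. unfold conjg, t. simpl222. reflexivity. Qed.
Lemma conj_zV_u : conjg G (ginv z) u = gmul t (ginv u).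
Proof. unfold conjg, t, u. simpl222. reflexivity. Qed.
Lemma conj_zV_t : conjg G (ginv z) t = t. Proof. unfold conjg, t. simpl222. reflexivity. Qed.
Lemma conj_u_t : conjg G u t = ginv t. Proof. unfold conjg, t, u. simpl222. reflexivity. Qed.
Lemma conj_uV_t : conjg G (ginv u) t = ginv t. Proof. unfold conjg, t, u. simpl222. reflexivity. Qed.
Lemma y_eq_xt : y = gmul x t. Proof. unfold t. simpl222. reflexivity. Qed.

Let UT : G -> Prop := fun w => w = u \/ w = t.
Let T : G -> Prop := fun w => w = t.
Hypothesis Gen : forall g, gen (fun w => w = x \/ w = y \/ w = z) g.

Lemma normal_UT h : normalizes G UT h.
Proof.
  assert (gu : gen UT u) by (apply gen_in; left; reflexivity).
  assert (gt : gen UT t) by (apply gen_in; right; reflexivity).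
  assert (Nx : normalizes G UT x).
  { assert (K : forall g, gen UT g -> gen UT (conjg G x g)).
    { apply conj_gen. intros s [-> | ->].
      - rewrite conj_x_u. apply gen_mul; auto. apply gen_inv; auto.
      - rewrite conj_x_t. apply gen_inv; auto. }
    split; auto. rewrite x_inv. auto. }
  assert (Nz : normalizes G UT z).
  { split; apply conj_gen; intros s [-> | ->].
    - rewrite conj_z_u. apply gen_mul; auto. apply gen_inv; auto.
    - rewrite conj_z_t. auto.
    - rewrite conj_zV_u. apply gen_mul; auto. apply gen_inv; auto.
    - rewrite conj_zV_t. auto. }
  assert (Ny : normalizes G UT y).
  { apply (normalizes_closed G UT (fun w => w = x \/ w = t)).
    - intros w [-> | ->]; auto. apply normalizes_gen_in; auto.
    - rewrite y_eq_xt. apply gen_mul; apply gen_in; auto. }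
  apply (normalizes_closed G UT (fun w => w = x \/ w = y \/ w = z)); [|apply Gen].
  intros w [-> | [-> | ->]]; auto.
Qed.

Lemma normal_T h : gen UT h -> normalizes G T h.
Proof.
  assert (gt : gen T t) by (apply gen_in; reflexivity).
  apply normalizes_closed. intros w [-> | ->].
  - split; apply conj_gen; intros s ->.
    + rewrite conj_u_t. apply gen_inv; auto.
    + rewrite conj_uV_t. apply gen_inv; auto.
  - apply normalizes_gen_in; auto.
Qed.

(* G / <u, t> is generated by x: x^-1 y = t and x^-1 z = u. *)
Lemma quotient_by_UT g : exists m, gen UT (gmul (ginv (gzpow x m)) g).
Proof.
  apply (cyclic_quotient G UT (fun w => w = x \/ w = y \/ w = z) x); [| |apply Gen].
  - intros s [-> | [-> | ->]]; exists 1; rewrite gzpow_1, x_inv.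
    + rewrite Px. apply gen_one.
    + apply gen_in. right. reflexivity.
    + apply gen_in. left. reflexivity.
  - intro m. apply normal_UT.
Qed.

Lemma quotient_by_T g : gen UT g -> exists m, gen T (gmul (ginv (gzpow u m)) g).
Proof.
  apply (cyclic_quotient G T UT u).
  - intros s [-> | ->].
    + exists 1. rewrite gzpow_1, gmul_Vl. apply gen_one.
    + exists 0. simpl. rewrite ginv_one, gmul_1l. apply gen_in. reflexivity.
  - intro m. apply normal_T, gzpow_gen, gen_in. left. reflexivity.
Qed.

Lemma polycyclic_222 : polycyclic G.
Proof.
  exists 3%nat, (fun i : nat => match i with O => fun _ => True | S O => gen UT
                                   | S (S O) => gen T | _ => fun g => g = gone end).
  split; [intros; exact I|]. split; [intros; simpl; tauto|].
  split; [intros i Hi; destruct i as [|[|[|i]]]; try lia;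
          repeat split; auto using gen_one, gen_mul, gen_inv|].
  split.
  { intros i Hi g; destruct i as [|[|[|i]]]; try lia; simpl; auto.
    - apply gen_mono. intros w ->. right. reflexivity.
    - intros ->. apply gen_one. }
  split.
  - intros i Hi g h; destruct i as [|[|[|i]]]; try lia; simpl; intros Hg Hh.
    + rewrite gmul_assoc. apply (normal_UT h); auto.
    + rewrite gmul_assoc. apply (normal_T h); auto.
    + subst. rewrite gmul_1l, gmul_Vl. reflexivity.
  - intros i Hi; destruct i as [|[|[|i]]]; try lia.
    + exists x. split; [exact I|]. intros g _. apply quotient_by_UT.
    + exists u. split; [apply gen_in; left; reflexivity|]. apply quotient_by_T.
    + exists t. split; [apply gen_in; reflexivity|]. intros g Hg. simpl.
      destruct (gen_cyclic G t g Hg) as [m ->]. exists m. apply gmul_Vl.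
Qed.
End Presentation222.

Close Scope Z_scope.

Lemma presents_222_polycyclic (G : Group) (x y z : G) :
  presents 2 2 2 G x y z -> polycyclic G.
Proof.
  intro P. pose proof (presents_generated _ _ _ G x y z P) as Gen.
  destruct P as (Px & Py & Pz & _). simpl in Px, Py, Pz. rewrite gmul_1r in Px, Py, Pz.
  exact (polycyclic_222 G x y z Px Py Pz Gen).
Qed.

Lemma not_solvable_unless_222 (G : Group) (x y z : G) j k l :
  (1 < j)%nat -> (1 < k)%nat -> (1 < l)%nat -> presents j k l G x y z ->
  ~ (j = 2 /\ k = 2 /\ l = 2)%nat -> ~ solvable G.
Proof.
  intros Hj Hk Hl P Hn.
  destruct (Nat.eq_dec j 2) as [->|Ej]; destruct (Nat.eq_dec k 2) as [->|Ek].
  - destruct (Nat.eq_dec l 3) as [->|El].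
    + exact (not_solvable_223 G x y z P).
    + apply (not_solvable_22l G x y z l); [lia | exact P].
  - destruct (Nat.eq_dec k 3) as [->|Ek3].
    + apply (not_solvable_23l G x y z l); [lia | exact P].
    + apply (not_solvable_jkl G x y z 2 k l); [lia | lia | exact P].
  - destruct (Nat.eq_dec j 3) as [->|Ej3].
    + apply (not_solvable_32l G x y z l); [lia | exact P].
    + apply (not_solvable_jkl G x y z j 2 l); [lia | lia | exact P].
  - apply (not_solvable_jkl G x y z j k l); [lia | lia | exact P].
Qed.

Theorem proposition7p2 :
  forall (j k l : nat), 1 < j -> 1 < k -> 1 < l ->
  forall (G : Group) (x y z : G), presents j k l G x y z ->
    (solvable G <-> (j = 2 /\ k = 2 /\ l = 2)) /\
    (j = 2 -> k = 2 -> l = 2 -> polycyclic G).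
Proof.
  intros j k l Hj Hk Hl G x y z P.
  split; [split|].
  - intro S. destruct (Nat.eq_dec j 2), (Nat.eq_dec k 2), (Nat.eq_dec l 2); auto;
      exfalso; apply (not_solvable_unless_222 G x y z j k l Hj Hk Hl P); auto; lia.
  - intros (-> & -> & ->). apply polycyclic_solvable, (presents_222_polycyclic G x y z P).
  - intros -> -> ->. exact (presents_222_polycyclic G x y z P).
Qed.
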